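(* Let $\mathcal A$ be an indecomposable bounded linear operator on a semiunitary space $U$, and suppose $0\ne U_0\ne U$, where $U_0=\{u\in U:\langle u,u\rangle=0\}$. Let $\mathcal A_0:U_0\to U_0$ be the restriction of $\mathcal A$ to $U_0$ and $\mathcal A_1:U/U_0\to U/U_0$ the induced operator $u+U_0\mapsto \mathcal Au+U_0$. If $\lambda$ is an eigenvalue of $\mathcal A_0$, then (a) $\lambda$ is an eigenvalue of $\mathcal A_1$; (b) the algebraic multiplicity of $\lambda$ in $\mathcal A_1$ is greater than or equal to the geometric multiplicity of $\lambda$ in $\mathcal A_0$; (c) for each $k\ge1$, the geometric multiplicity of $\lambda$ in $\mathcal A_1$ is greater than or equal to the number of Jordan blocks $J_k(\lambda)$ of size $k\times k$ in the Jordan canonical form of $\mathcal A_0$.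
   Context: A semiunitary space is a finite-dimensional complex vector space $U$ with a positive semidefinite Hermitian form $\langle\cdot,\cdot\rangle$; $\|u\|=\sqrt{\langle u,u\rangle}$. A linear operator $\mathcal A:U\to U$ is bounded if there is a positive real $c$ with $\|\mathcal Au\|\le c\|u\|$ for all $u\in U$ (equivalently, $U_0$ is $\mathcal A$-invariant). An operator $\mathcal A$ on $U$ is indecomposable if $U$ cannot be written as $U=V\oplus W$ with $V,W$ nonzero $\mathcal A$-invariant subspaces such that $\langle v,w\rangle=0$ for all $v\in V$, $w\in W$. The geometric multiplicity of an eigenvalue is the number of Jordan blocks with that eigenvalue in the Jordan canonical form; the algebraic multiplicity is its multiplicity as a root of the characteristic polynomial. *)

From HB Require Import structures.
From mathcomp Require Import all_boot all_order all_algebra.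
Set Implicit Arguments. Unset Strict Implicit. Unset Printing Implicit Defensive.
Import Order.TTheory GRing.Theory Num.Theory.
Local Open Scope ring_scope.

(* Conventions: the semiunitary space U is C^n (n = r + s) with vectors written
   as ROW vectors 'rV[C]_n; a linear operator is a square matrix A acting by
   u |-> u *m A. *)

Section Defs.
Variable C : numClosedFieldType.

Definition hform n (G : 'M[C]_n) (u v : 'rV[C]_n) : C :=
  (u *m G *m (map_mx Num.conj v)^T) 0 0.

Definition hermitian_mx n (G : 'M[C]_n) : Prop := G = (map_mx Num.conj G)^T.

Definition psd_form n (G : 'M[C]_n) : Prop := forall u : 'rV[C]_n, 0 <= hform G u u.

Definition semi_norm n (G : 'M[C]_n) (u : 'rV[C]_n) : C := sqrtC (hform G u u).

Definition bounded_op n (G A : 'M[C]_n) : Prop :=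
  exists c : C, c \is Num.real /\ 0 < c /\
    forall u : 'rV[C]_n, semi_norm G (u *m A) <= c * semi_norm G u.

(* A is indecomposable: U is not an orthogonal direct sum of two nonzero
   A-invariant subspaces (subspaces = row spaces of square matrices). *)
Definition indecomposable_op n (G A : 'M[C]_n) : Prop :=
  ~ exists V W : 'M[C]_n,
      [/\ V != 0, W != 0, (V + W == 1%:M)%MS && mxdirect (V + W),
          stablemx V A && stablemx W A &
          forall v w : 'rV[C]_n, (v <= V)%MS -> (w <= W)%MS -> hform G v w = 0].

(* Given an invertible change-of-basis matrix P whose first r rows form a basis
   of U_0 and last s rows complete it to a basis of U, the matrix of A in the
   basis given by the rows of P is  P A P^-1 ; its upper-left r x r block is
   the matrix of the restriction A_0 : U_0 -> U_0 and its lower-right s x s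
   block is the matrix of the induced operator A_1 : U/U_0 -> U/U_0 (in the
   basis of the images of the last s rows of P). *)
Definition restr_op r s (P A : 'M[C]_(r + s)) : 'M[C]_r :=
  ulsubmx (P *m A *m invmx P).
Definition quot_op r s (P A : 'M[C]_(r + s)) : 'M[C]_s :=
  drsubmx (P *m A *m invmx P).

Definition jordan_block (a : C) (k : nat) : 'M[C]_k :=
  \matrix_(i < k, j < k) (a *+ (i == j :> nat) + ((j : nat) == i.+1)%:R).

Definition is_jordan_form n (A : 'M[C]_n) (m : nat) (sz : 'I_m -> nat)
    (ev : 'I_m -> C) : Prop :=
  (forall i, 0 < sz i)%N /\
  exists (e : (\sum_(i < m) sz i)%N = n) (Q : 'M[C]_n),
    Q \in unitmx /\
    A = invmx Q *m castmx (e, e) (\mxdiag_(i < m) jordan_block (ev i) (sz i)) *m Q.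

(* number of Jordan blocks with eigenvalue a (= geometric multiplicity) *)
Definition n_blocks m (ev : 'I_m -> C) (a : C) : nat :=
  #|[pred i : 'I_m | ev i == a]|.

Definition n_blocks_of_size m (sz : 'I_m -> nat) (ev : 'I_m -> C) (a : C)
    (k : nat) : nat :=
  #|[pred i : 'I_m | (ev i == a) && (sz i == k)]|.

Definition alg_mult n (A : 'M[C]_n) (a : C) : nat := mup a (char_poly A).

End Defs.

(* In a basis adapted to U_0 the matrix of N = A - lam is block lower triangular,
   with diagonal blocks N_0 = A_0 - lam and N_1 = A_1 - lam.  Indecomposability
   gives the key fact: if y is in U_0 and y N^(k+1) = 0, then y N^k lies in
   Im N^(k+1).  Otherwise a functional c vanishing on Im N^(k+1) with y N^k c <> 0
   splits U into the span of the chain y, y N, ..., y N^k, which lies in U_0 and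
   is therefore orthogonal to all of U, and the common kernel of
   c, N c, ..., N^k c; both are N-invariant.
   Hence Im N_0^k ∩ ker N_0 lifts into Im N^(k+1) ∩ ker N, so the rank drops of
   the powers of N_0 are bounded by those of N.  Together with elementary rank
   inequalities for block triangular matrices this gives
   dim ker N_0 <= dim ker N_1^m for large m, whence (a) and (b), and bounds the
   second differences of the ranks of the powers of N_0, which count the blocks
   J_(k+1)(lam) of A_0, by dim ker N_1, whence (c). *)

From HB Require Import structures.
From mathcomp Require Import all_boot all_order all_algebra.
From mathcomp Require Import zify ring.
Import Order.TTheory GRing.Theory Num.Theory.
Local Open Scope ring_scope.

Set Implicit Arguments. Unset Strict Implicit. Unset Printing Implicit Defensive.

Section MatrixFacts.
Variable F : fieldType.

Lemma mul_mxdiag p (p_ : 'I_p -> nat) (D E : forall i, 'M[F]_(p_ i)) :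
  \mxdiag_i D i *m \mxdiag_i E i = \mxdiag_i (D i *m E i).
Proof.
rewrite [X in _ *m X]/mxdiag mul_mxdiag_mxblock /mxdiag; apply/eq_mxblock => i j.
by case: eqVneq => [->|]; rewrite ?conform_mx_id ?mulmx0.
Qed.

Lemma mxdiagX p (p_ : 'I_p -> nat) (D : forall i, 'M[F]_(p_ i)) j :
  (\mxdiag_i D i) ^+ j = \mxdiag_i (D i ^+ j).
Proof.
elim: j => [|j IH].
  by rewrite expr0; under eq_mxdiag do rewrite expr0; rewrite (mxdiagZ (p_ := p_) 1).
by rewrite exprSr -mulmxE IH mul_mxdiag; apply: eq_mxdiag => i; rewrite exprSr.
Qed.

Lemma conj_unitmxX n (Q Z : 'M[F]_n) j : Q \in unitmx ->
  (Q *m Z *m invmx Q) ^+ j = Q *m Z ^+ j *m invmx Q.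
Proof.
move=> Qu; elim: j => [|j IH]; first by rewrite !expr0 mulmx1 mulmxV.
by rewrite !exprSr -!mulmxE IH !mulmxA mulmxKV.
Qed.

Lemma mxrank_conj_unitmx n (Q Z : 'M[F]_n) : Q \in unitmx ->
  \rank (Q *m Z *m invmx Q) = \rank Z.
Proof.
move=> Qu; rewrite mxrankMfree ?row_free_unit ?unitmx_inv //.
by rewrite eqmxMfull // row_full_unit.
Qed.

Lemma conj_unitmx_subC n (Q Z : 'M[F]_n) (b : F) : Q \in unitmx ->
  Q *m (Z - b%:M) *m invmx Q = Q *m Z *m invmx Q - b%:M.
Proof.
move=> Qu; rewrite mulmxBr mulmxBl mul_mx_scalar -scalemxAl mulmxV //.
by rewrite scalemx1.
Qed.

Lemma lblockX m n (A : 'M[F]_m) (B : 'M_(n, m)) (D : 'M_n) j :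
  exists Bj, (block_mx A 0 B D) ^+ j = block_mx (A ^+ j) 0 Bj (D ^+ j).
Proof.
elim: j => [|j [Bj IH]]; first by exists 0; rewrite !expr0 -scalar_mx_block.
exists (Bj *m A + D ^+ j *m B).
rewrite exprSr -mulmxE IH mulmx_block !mulmx0 !mul0mx !addr0 add0r.
by rewrite !exprSr !mulmxE.
Qed.

Lemma mul_row0_lblockX p m n (x : 'M[F]_(p, m)) (A : 'M_m) (B : 'M_(n, m))
    (D : 'M_n) j :
  row_mx x 0 *m (block_mx A 0 B D) ^+ j = row_mx (x *m A ^+ j) 0.
Proof.
have [Bj ->] := lblockX A B D j.
by rewrite mul_row_block !mul0mx !mulmx0 !addr0.
Qed.

Lemma lblock_subC m n (A : 'M[F]_m) (B : 'M_(n, m)) (D : 'M_n) (b : F) :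
  block_mx A 0 B D - b%:M = block_mx (A - b%:M) 0 B (D - b%:M).
Proof. by rewrite (scalar_mx_block m n b) opp_block_mx add_block_mx !oppr0 !addr0. Qed.

Lemma ursubmx_conj_stable m n (Q Z : 'M[F]_(m + n)) :
  Q \in unitmx -> stablemx (usubmx Q) Z -> ursubmx (Q *m Z *m invmx Q) = 0.
Proof.
move=> Qu QZ.
have QQ : usubmx Q *m invmx Q = row_mx 1%:M 0.
  rewrite mul_usub_mx mulmxV // (scalar_mx_block m n 1) block_mxEv.
  by rewrite col_mxKu.
rewrite /ursubmx -!mul_usub_mx -(mulmxKpV QZ) -mulmxA QQ mul_mx_row mulmx0.
by rewrite row_mxKr.
Qed.

Lemma mxrank_lblock_diag m1 m2 n1 n2 (A : 'M[F]_(m1, n1)) (B : 'M_(m2, n1))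
    (D : 'M_(m2, n2)) :
  (\rank A + \rank D <= \rank (block_mx A 0 B D))%N.
Proof.
pose Pr := col_mx (0 : 'M[F]_(n1, n2)) (1%:M : 'M_n2).
have := mxrank_mul_ker (block_mx A 0 B D) Pr.
rewrite mul_block_col !mulmx0 !mulmx1 !add0r rank_col_0mx.
suff : (\rank A <= \rank (block_mx A 0 B D :&: kermx Pr))%N by lia.
rewrite -(rank_row_mx0 n2 A); apply: mxrankS; rewrite sub_capmx.
rewrite block_mxEv -addsmxE addsmxSl /=.
by apply/sub_kermxP; rewrite mul_row_col mulmx0 mul0mx addr0.
Qed.

Lemma mxrank_lblock_le m1 m2 n1 n2 (A : 'M[F]_(m1, n1)) (B : 'M_(m2, n1))
    (D : 'M_(m2, n2)) :
  (\rank (block_mx A 0 B D) <= \rank A + m2)%N.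
Proof.
rewrite block_mxEv -addsmxE (leq_trans (mxrank_adds_leqif _ _)) //.
by rewrite rank_row_mx0 leq_add2l rank_leq_row.
Qed.

Lemma eigenvalue_mxrank n (g : 'M[F]_n) a :
  eigenvalue g a = (\rank (g - a%:M)%R < n)%N.
Proof. by rewrite /eigenvalue /eigenspace -mxrank_eq0 mxrank_ker subn_eq0 -ltnNge. Qed.

End MatrixFacts.

Lemma nonincreasing_stall (f : nat -> nat) :
  (forall j, f j.+1 <= f j)%N -> exists J, f J = f J.+1.
Proof.
move=> f_dec.
suff [//|] : (exists J, f J = f J.+1) \/ (f (f 0%N).+1 + (f 0%N).+1 <= f 0%N)%N by lia.
elim: (f 0%N).+1 => [|j [|IH]]; [by right; rewrite addn0 | by left |].
have := f_dec j; rewrite leq_eqVlt => /orP[/eqP fj|]; [by left; exists j | right; lia].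
Qed.

Section LowerBlockRanks.
Variables (F : fieldType) (r s : nat) (N0 : 'M[F]_r) (B : 'M[F]_(s, r)) (N1 : 'M[F]_s).
Let N := block_mx N0 0 B N1.

Lemma mxrank_lblockX_diag j : (\rank (N0 ^+ j) + \rank (N1 ^+ j) <= \rank (N ^+ j))%N.
Proof. by have [Bj ->] := lblockX N0 B N1 j; apply: mxrank_lblock_diag. Qed.

(* E spans U_0; apply Sylvester's inequality to (E + N) N^k = E N^k + N^(k+1). *)
Lemma rank_drop_lblockX_le k :
  (\rank (N ^+ k) + \rank (N0 ^+ k.+1) + \rank N1
     <= \rank (N0 ^+ k) + \rank (N ^+ k.+1) + s)%N.
Proof.
pose E := row_mx (1%:M : 'M[F]_r) (0 : 'M_(r, s)).
have EN j : E *m N ^+ j = row_mx (N0 ^+ j) 0 by rewrite mul_row0_lblockX mul1mx.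
have rEN j : \rank (E *m N ^+ j) = \rank (N0 ^+ j) by rewrite EN rank_row_mx0.
have sum_cap := mxrank_sum_cap (E *m N ^+ k) (N ^+ k.+1).
have cap_ge : (\rank (E *m N ^+ k.+1) <= \rank (E *m N ^+ k :&: N ^+ k.+1)%MS)%N.
  apply: mxrankS; rewrite sub_capmx submxMl andbT !EN.
  have -> : row_mx (N0 ^+ k.+1) 0 = N0 *m row_mx (N0 ^+ k) (0 : 'M_(r, s)).
    by rewrite mul_mx_row mulmx0 exprS mulmxE.
  exact: submxMl.
have sylvester := mxrank_mul_min (E + N)%MS (N ^+ k).
rewrite addsmxMr mulmxE -exprS in sylvester.
have EN_ge : (r + \rank N1 <= \rank (E + N)%MS)%N.
  rewrite -[X in (X + _)%N](mxrank1 F r) -rank_diag_block_mx; apply: mxrankS.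
  rewrite block_mxEv col_mx_sub addsmxSl /=.
  have -> : row_mx (0 : 'M_(s, r)) N1 = row_mx 0 1%:M *m N + (- B) *m E.
    rewrite mul_row_block mul_mx_row !mul0mx !add0r !mul1mx mulmx1 mulmx0.
    by rewrite add_row_mx subrr addr0.
  by rewrite addrC addmx_sub_adds ?submxMl.
rewrite !rEN in sum_cap cap_ge; lia.
Qed.

Hypothesis chain_lift : forall (x : 'rV_r) k,
  row_mx x 0 *m N ^+ k.+1 = 0 -> (row_mx x 0 *m N ^+ k <= N ^+ k.+1)%MS.

Lemma rank_drop_ulX_le k :
  (\rank (N0 ^+ k) + \rank (N ^+ k.+2) <= \rank (N0 ^+ k.+1) + \rank (N ^+ k.+1))%N.
Proof.
have := mxrank_mul_ker (N0 ^+ k) N0; have := mxrank_mul_ker (N ^+ k.+1) N.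
rewrite !mulmxE -!exprSr.
suff : (\rank (N0 ^+ k :&: kermx N0) <= \rank (N ^+ k.+1 :&: kermx N))%N by lia.
rewrite -(rank_row_mx0 s (N0 ^+ k :&: kermx N0)%MS); apply: mxrankS.
apply/row_subP => i; rewrite row_row_mx row0.
have : (row i (N0 ^+ k :&: kermx N0) <= N0 ^+ k :&: kermx N0)%MS by apply: row_sub.
rewrite sub_capmx => /andP[/submxP[z ->] /sub_kermxP zN0].
have zN : row_mx z 0 *m N ^+ k.+1 = 0.
  by rewrite mul_row0_lblockX exprSr -mulmxE mulmxA zN0 row_mx0.
rewrite sub_capmx -(mul_row0_lblockX z N0 B N1) chain_lift //=.
by apply/sub_kermxP; rewrite -mulmxA mulmxE -exprSr.
Qed.

Lemma lblock_nullity_le : exists m, (r - \rank N0 <= s - \rank (N1 ^+ m))%N.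
Proof.
have [J stallJ] : exists J, \rank (N0 ^+ J) = \rank (N0 ^+ J.+1).
  apply: (@nonincreasing_stall (fun j => \rank (N0 ^+ j))) => j.
  by rewrite exprSr -mulmxE mxrankM_maxl.
exists J.+1.
have tele : (r + \rank (N ^+ J.+1) <= \rank N + \rank (N0 ^+ J))%N.
  elim: J {stallJ} => [|J IH]; first by rewrite expr0 mxrank1 addnC.
  by have := rank_drop_ulX_le J; lia.
have := mxrank_lblockX_diag J.+1; have := mxrank_lblock_le N0 B N1; rewrite -/N; lia.
Qed.

Lemma lblock_rank_second_diff_le k :
  (\rank (N0 ^+ k) + \rank (N0 ^+ k.+2) - \rank (N0 ^+ k.+1) * 2 <= s - \rank N1)%N.
Proof. by have := rank_drop_ulX_le k; have := rank_drop_lblockX_le k.+1; lia. Qed.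

End LowerBlockRanks.

Lemma mxrank_castmx_subCX (F : fieldType) n n' (e : n = n') (Y : 'M[F]_n) b j :
  \rank ((castmx (e, e) Y - b%:M) ^+ j) = \rank ((Y - b%:M) ^+ j).
Proof. by case: n' / e; rewrite castmx_id. Qed.

Section JordanForm.
Variable C : numClosedFieldType.

Lemma sum_ord_deltaE k m (G : nat -> C) :
  \sum_(t < k) ((t == m :> nat)%:R * G t) = if (m < k)%N then G m else 0.
Proof. by under eq_bigr do rewrite mulr_natl mulrb; rewrite -big_mkcond big_ord1_eq. Qed.

Definition shift_mx (k j : nat) : 'M[C]_k := \matrix_(i, l) ((l == (i + j)%N :> nat)%:R).

Lemma jordan_block0X k j : jordan_block 0 k ^+ j = shift_mx k j.
Proof.
elim: j => [|j IH].
  by apply/matrixP => i l; rewrite expr0 !mxE addn0 eq_sym -val_eqE.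
rewrite exprSr -mulmxE IH; apply/matrixP => i l; rewrite !mxE.
under eq_bigr do rewrite !mxE mul0rn add0r.
move: (sum_ord_deltaE k (i + j) (fun t => (l == t.+1 :> nat)%:R)) => /= ->.
rewrite addnS; case: ltnP => // h.
by rewrite ltn_eqF //; exact: leq_trans (ltn_ord l) (leqW h).
Qed.

Lemma mxrank_shift_mx k j : \rank (shift_mx k j) = (k - j)%N.
Proof.
apply/eqP; rewrite eqn_leq; apply/andP; split.
  have -> : shift_mx k j = pid_mx (k - j) *m shift_mx k j.
    apply/matrixP => i l; rewrite !mxE.
    under eq_bigr do rewrite !mxE.
    case: (ltnP i (k - j)) => hi.
      under eq_bigr do rewrite andbT eq_sym.
      by move: (sum_ord_deltaE k i (fun t => (l == (t + j)%N :> nat)%:R)) => /= ->; rewrite ltn_ord.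
    rewrite big1 => [|t _]; last by rewrite andbF mul0r.
    by rewrite ltn_eqF //; have := ltn_ord l; lia.
  by rewrite (leq_trans (mxrankM_maxl _ _)) // rank_pid_mx // leq_subr.
have -> : (k - j)%N = \rank (pid_mx (k - j) : 'M[C]_k) by rewrite rank_pid_mx // leq_subr.
have -> : pid_mx (k - j) = shift_mx k j *m (shift_mx k j)^T.
  apply/matrixP => i i'; rewrite !mxE.
  under eq_bigr do rewrite !mxE.
  move: (sum_ord_deltaE k (i + j) (fun t => (t == (i' + j)%N :> nat)%:R)) => /= ->.
  by rewrite eqn_add2r ltn_subRL addnC; case: ltnP; rewrite ?andbT ?andbF.
exact: mxrankM_maxl.
Qed.

Lemma jordan_block_unit (a : C) k : a != 0 -> jordan_block a k \in unitmx.
Proof.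
move=> a0; rewrite unitmxE -det_tr det_trig.
  under eq_bigr do rewrite !mxE eqxx mulr1n ltn_eqF // addr0.
  by rewrite prodr_const unitfE expf_neq0.
apply/is_trig_mxP => i j lij; rewrite !mxE gtn_eqF // ltn_eqF ?mulr0n ?add0r //.
exact: ltnW.
Qed.

Lemma mxrank_jordan_blockX (a : C) k j :
  \rank (jordan_block a k ^+ j) = if a == 0 then (k - j)%N else k.
Proof.
case: eqP => [->|/eqP a0]; first by rewrite jordan_block0X mxrank_shift_mx.
elim: j => [|j IH]; first by rewrite expr0 mxrank1.
by rewrite exprSr -mulmxE mxrankMfree // row_free_unit jordan_block_unit.
Qed.

Lemma jordan_block_subC (a b : C) k :
  jordan_block a k - b%:M = jordan_block (a - b) k.
Proof.
apply/matrixP => i j; rewrite !mxE -val_eqE /=.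
by case: eqP => _; rewrite ?mulr1n ?mulr0n ?subr0 // addrAC.
Qed.

Section JordanFormRanks.
Variables (n : nat) (X : 'M[C]_n) (m : nat) (sz : 'I_m -> nat) (ev : 'I_m -> C).
Hypothesis XJ : is_jordan_form X sz ev.

Lemma jordan_form_rankX b j : \rank ((X - b%:M) ^+ j) =
  (\sum_(i < m) (if ev i == b then sz i - j else sz i))%N.
Proof.
have [_ [e [Q [Qu ->]]]] := XJ.
rewrite -{2}(invmxK Q) -conj_unitmx_subC ?unitmx_inv // conj_unitmxX ?unitmx_inv //.
rewrite mxrank_conj_unitmx ?unitmx_inv // mxrank_castmx_subCX.
rewrite -(mxdiagZ (p_ := sz) b) -mxdiagB.
under eq_mxdiag do rewrite jordan_block_subC.
rewrite mxdiagX rank_mxdiag; apply: eq_bigr => i _.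
by rewrite mxrank_jordan_blockX subr_eq0.
Qed.

Lemma jordan_form_n_blocksE b : n_blocks ev b = (n - \rank (X - b%:M)%R)%N.
Proof.
suff : (\rank (X - b%:M)%R + n_blocks ev b)%N = n by lia.
have [sz_gt0 [e _]] := XJ; rewrite -[RHS]e -[X - _]expr1 jordan_form_rankX.
rewrite /n_blocks -sum1_card [S in (_ + S)%N]big_mkcond -big_split /=.
by apply: eq_bigr => i _; rewrite inE; case: eqP => _ //=; rewrite ?subnK ?addn0.
Qed.

Lemma jordan_form_n_blocks_of_sizeE b k :
  n_blocks_of_size sz ev b k.+1 =
    (\rank ((X - b%:M) ^+ k)%R + \rank ((X - b%:M) ^+ k.+2)%R
       - \rank ((X - b%:M) ^+ k.+1)%R * 2)%N.
Proof.
suff : (\rank ((X - b%:M) ^+ k)%R + \rank ((X - b%:M) ^+ k.+2)%R =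
        \rank ((X - b%:M) ^+ k.+1)%R + \rank ((X - b%:M) ^+ k.+1)%R
          + n_blocks_of_size sz ev b k.+1)%N by lia.
rewrite !jordan_form_rankX /n_blocks_of_size -sum1_card.
rewrite [S in (_ = _ + S)%N]big_mkcond -!big_split /=.
apply: eq_bigr => i _; rewrite inE; case: eqP => _ //=; last by rewrite addn0.
by case: (ltngtP (sz i) k.+1) => h; lia.
Qed.

End JordanFormRanks.
End JordanForm.

Lemma exists_row_base (F : fieldType) k m n (K : 'M[F]_(m, n)) : \rank K = k ->
  exists V : 'M[F]_(k, n), row_free V /\ (V :=: K)%MS.
Proof. by move=> <-; exists (row_base K); split; [apply: row_base_free | apply: eq_row_base]. Qed.

Section CharPoly.
Variable F : closedFieldType.

Lemma char_poly_conj_unitmx n (Q A : 'M[F]_n) : Q \in unitmx ->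
  char_poly (Q *m A *m invmx Q) = char_poly A.
Proof.
move=> Qu; rewrite /char_poly.
have QQ : map_mx polyC Q *m map_mx polyC (invmx Q) = 1%:M.
  by rewrite -map_mxM mulmxV // map_mx1.
have -> : char_poly_mx (Q *m A *m invmx Q) =
    map_mx polyC Q *m char_poly_mx A *m map_mx polyC (invmx Q).
  by rewrite /char_poly_mx mulmxBr mulmxBl !map_mxM mul_mx_scalar -scalemxAl QQ scalemx1.
by rewrite !det_mulmx mulrAC -det_mulmx QQ det1 mul1r.
Qed.

Lemma char_poly_castmx n n' (e : n = n') (A : 'M[F]_n) :
  char_poly (castmx (e, e) A) = char_poly A.
Proof. by case: n' / e; rewrite castmx_id. Qed.

Lemma char_poly_lblock d e (T : 'M[F]_d) (X : 'M_(e, d)) (R : 'M_e) :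
  char_poly (block_mx T 0 X R) = char_poly T * char_poly R.
Proof.
rewrite /char_poly /char_poly_mx map_block_mx map_mx0 (scalar_mx_block d e 'X).
by rewrite opp_block_mx add_block_mx oppr0 addr0 det_lblock.
Qed.

Lemma char_poly_nilpotent_subC d (T : 'M[F]_d) (b : F) m :
  (T - b%:M) ^+ m = 0 -> char_poly T = ('X - b%:P) ^+ d.
Proof.
move=> Tm; have [rs def_rs] := closed_field_poly_normal (char_poly T).
rewrite (monicP (char_poly_monic T)) scale1r in def_rs.
have rs_b z : z \in rs -> z = b.
  move=> z_rs; have /eigenvalueP[v vT v_neq0] : eigenvalue T z.
    by rewrite eigenvalue_root_char def_rs root_prod_XsubC.
  have vTj j : v *m (T - b%:M) ^+ j = (z - b) ^+ j *: v.
    elim: j => [|j IH]; first by rewrite !expr0 mulmx1 scale1r.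
    rewrite exprSr -mulmxE mulmxA IH -scalemxAl mulmxBr vT mul_mx_scalar.
    by rewrite -scalerBl scalerA -exprSr.
  have /esym/eqP := vTj m; rewrite Tm mulmx0 scaler_eq0 (negPf v_neq0) orbF.
  by rewrite expf_eq0 subr_eq0 => /andP[_ /eqP].
have size_rs : size rs = d.
  by have := size_char_poly T; rewrite def_rs size_prod_XsubC => -[].
rewrite def_rs (_ : rs = nseq d b) ?big_nseq ?iter_mulr_1 // -size_rs.
by apply/all_pred1P/allP => z /rs_b ->; rewrite /= eqxx.
Qed.

(* In a basis adapted to the A-invariant space ker (A - b)^m, A is block
   triangular and A - b is nilpotent on the first diagonal block. *)
Lemma mup_char_poly_ge d e (A : 'M[F]_(d + e)) b m :
  \rank ((A - b%:M) ^+ m) = e -> (d <= mup b (char_poly A))%N.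
Proof.
move=> rk; set K := kermx ((A - b%:M) ^+ m).
have rK : \rank K = d by rewrite mxrank_ker rk addnK.
have [V [_ VK]] := exists_row_base rK.
have [W [_ WK]] : exists W : 'M[F]_(e, d + e), row_free W /\ (W :=: K^C)%MS.
  by apply: exists_row_base; rewrite mxrank_compl rK addKn.
set Q := col_mx V W.
have Qu : Q \in unitmx.
  rewrite -row_full_unit /row_full /Q -addsmxE (adds_eqmx VK WK).
  exact: addsmx_compl_full.
have VA : stablemx (usubmx Q) A.
  rewrite /Q col_mxKu (eqmxMr A VK) VK; apply: comm_mx_stable_ker.
  apply/comm_mx_sym; rewrite comm_mxE; apply: commrX; rewrite -comm_mxE.
  by apply: comm_mxB; [apply: comm_mx_refl | apply: comm_mx_scalar].
set M := Q *m A *m invmx Q.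
have defM : M = block_mx (ulsubmx M) 0 (dlsubmx M) (drsubmx M).
  by rewrite -(ursubmx_conj_stable Qu VA) submxK.
have nilM : (ulsubmx M - b%:M) ^+ m = 0.
  have [Bm powM] := lblockX (ulsubmx M - b%:M) (dlsubmx M) (drsubmx M - b%:M) m.
  have : usubmx (Q *m (A - b%:M) ^+ m *m invmx Q) = 0.
    rewrite -!mul_usub_mx col_mxKu.
    have /sub_kermxP -> : (V <= K)%MS by rewrite VK.
    exact: mul0mx.
  rewrite -conj_unitmxX // conj_unitmx_subC // -/M {1}defM lblock_subC powM.
  by rewrite block_mxEv col_mxKu -row_mx0 => /eq_row_mx[].
rewrite -(char_poly_conj_unitmx A Qu) -/M defM char_poly_lblock.
rewrite (char_poly_nilpotent_subC nilM) mup_geq ?dvdp_mulr //.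
by rewrite monic_neq0 // monicMr ?char_poly_monic // monic_exp ?monicXsubC.
Qed.

Lemma mxrank_ker_subCX_le_mup n (A : 'M[F]_n) b m :
  (\rank (kermx ((A - b%:M) ^+ m)) <= mup b (char_poly A))%N.
Proof.
rewrite mxrank_ker.
have e : n = (n - \rank ((A - b%:M) ^+ m) + \rank ((A - b%:M) ^+ m))%N.
  by rewrite subnK ?rank_leq_row.
rewrite -(char_poly_castmx e); apply: mup_char_poly_ge.
by rewrite mxrank_castmx_subCX.
Qed.

End CharPoly.

Section Complements.
Variable F : fieldType.

Lemma not_submx_separating_col m n (M : 'M[F]_(m, n)) (w : 'rV_n) :
  ~~ (w <= M)%MS -> exists c : 'cV_n, M *m c = 0 /\ (w *m c) 0 0 != 0.
Proof.
rewrite submxE => /matrix0Pn[i [j wj]]; exists (col j (cokermx M)).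
rewrite colE (mulmxA M) mulmx_coker mul0mx (mulmxA w) -colE mxE.
by rewrite (ord1 i) in wj.
Qed.

Lemma unitmx_mul_ker_direct m n (V : 'M[F]_(m, n)) (K : 'M_(n, m)) :
  V *m K \in unitmx ->
  (<<V>> + kermx K == 1%:M)%MS && mxdirect (<<V>> + kermx K).
Proof.
move=> VKu; apply/andP; split.
  rewrite submx1 -[1%:M](subrKC (K *m invmx (V *m K) *m V)) addmx_sub_adds //.
    by rewrite genmxE submxMl.
  apply/sub_kermxP; rewrite mulmxBl mul1mx -!mulmxA mulmxA.
  by rewrite mulmxKV ?subrr.
apply/mxdirect_addsP/eqP/rowV0P => v; rewrite sub_capmx genmxE.
case/andP=> /submxP[a ->] /sub_kermxP; rewrite -mulmxA => aVK.
by rewrite -[a](mulmxK VKu) aVK !mul0mx.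
Qed.

End Complements.

Section JordanChain.
Variables (F : fieldType) (n k : nat) (N : 'M[F]_n) (y : 'rV[F]_n) (c : 'cV[F]_n).

(* The rows are y N^k, ..., y N, y: in this order the pairing with cochain_mx
   is triangular. *)
Definition chain_mx : 'M[F]_(k.+1, n) := \matrix_(i < k.+1) (y *m N ^+ (k - i)).

Definition cochain_mx : 'M[F]_(n, k.+1) := \matrix_(a < n, j < k.+1) (N ^+ j *m c) a 0.

Lemma mul_cochain_mxE (u : 'rV_n) j : (u *m cochain_mx) 0 j = (u *m N ^+ j *m c) 0 0.
Proof. by rewrite -mulmxA !mxE; apply: eq_bigr => a _; rewrite mxE. Qed.

Hypothesis Nc : N ^+ k.+1 *m c = 0.

Lemma cochain_ker_stable : stablemx (kermx cochain_mx) N.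
Proof.
apply/row_subP => i; rewrite row_mul; apply/sub_kermxP.
have /sub_kermxP vK := row_sub i (kermx cochain_mx).
apply/rowP => j; rewrite mul_cochain_mxE -(mulmxA _ N) mulmxE -exprS [RHS]mxE.
case: (ltnP j.+1 k.+1) => [lt_jk|ge_jk].
  have := congr1 (fun v : 'rV[F]_k.+1 => v 0 (Ordinal lt_jk)) vK.
  by rewrite /= mul_cochain_mxE [RHS]mxE.
have -> : j.+1 = k.+1 by have := ltn_ord j; lia.
by rewrite -mulmxA Nc mulmx0 mxE.
Qed.

Hypothesis yN : y *m N ^+ k.+1 = 0.

Lemma chain_mx_stable : stablemx chain_mx N.
Proof.
apply/row_subP => -[[|j] lt_jk]; rewrite row_mul rowK -mulmxA mulmxE -exprSr /=.
  by rewrite subn0 yN sub0mx.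
by have := row_sub (Ordinal (ltnW lt_jk)) chain_mx; rewrite rowK subnSK.
Qed.

Hypothesis ync : (y *m N ^+ k *m c) 0 0 != 0.

Lemma chain_cochain_unit : chain_mx *m cochain_mx \in unitmx.
Proof.
have VKE i j : (chain_mx *m cochain_mx) i j = (y *m N ^+ (k - i + j) *m c) 0 0.
  have -> : (chain_mx *m cochain_mx) i j = row i (chain_mx *m cochain_mx) 0 j.
    by rewrite [RHS]mxE.
  by rewrite row_mul rowK mul_cochain_mxE exprD mulmxA.
rewrite unitmxE det_trig.
  under eq_bigr => i _ do rewrite VKE (@subnK i k (ltn_ord i)).
  by rewrite prodr_const unitfE expf_neq0.
apply/is_trig_mxP => i j lt_ij; rewrite VKE -(subnKC (_ : k.+1 <= k - i + j)%N).
  by rewrite exprD mulmxA yN !mul0mx mxE.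
by have := ltn_ord i; lia.
Qed.

End JordanChain.

Section SemiunitaryForm.
Variables (C : numClosedFieldType) (n : nat) (G : 'M[C]_n).

Lemma hformDl u1 u2 v : hform G (u1 + u2) v = hform G u1 v + hform G u2 v.
Proof. by rewrite /hform !mulmxDl mxE. Qed.

Lemma hformZl a u v : hform G (a *: u) v = a * hform G u v.
Proof. by rewrite /hform -!scalemxAl mxE. Qed.

Lemma hformDr u v1 v2 : hform G u (v1 + v2) = hform G u v1 + hform G u v2.
Proof. by rewrite /hform map_mxD linearD /= mulmxDr mxE. Qed.

Lemma hformZr a u v : hform G u (a *: v) = a^* * hform G u v.
Proof. by rewrite /hform map_mxZ linearZ /= -scalemxAr mxE. Qed.

Hypothesis hG : hermitian_mx G.

Lemma hformC u v : hform G v u = (hform G u v)^*.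
Proof.
have tr00 (M : 'M[C]_1) : M 0 0 = M^T 0 0 by rewrite mxE.
have conj00 (M : 'M[C]_1) : (M 0 0)^* = map_mx Num.conj M 0 0 by rewrite mxE.
have conjK p q (M : 'M[C]_(p, q)) : map_mx Num.conj (map_mx Num.conj M) = M.
  by apply/matrixP => i j; rewrite !mxE conjCK.
have GT : G^T = map_mx Num.conj G by rewrite {1}hG trmxK.
by rewrite /hform tr00 conj00 !trmx_mul trmxK !map_mxM map_trmx conjK GT mulmxA.
Qed.

Hypothesis hpsd : psd_form G.

(* Positivity at v - x a w, with x = 1/(c+1), reads |a|^2 x (x c - 2) >= 0,
   while x c - 2 < 0. *)
Lemma hform_null_radical v w : hform G v v = 0 -> hform G v w = 0.
Proof.
move=> v0; set a := hform G v w; set c := hform G w w.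
have c1_gt0 : 0 < c + 1 by rewrite ltr_wpDl ?hpsd.
pose x := (c + 1)^-1.
have x_gt0 : 0 < x by rewrite invr_gt0.
have xc_lt1 : x * c < 1 by rewrite mulrC ltr_pdivrMr // mul1r ltrDl.
have xr : x^* = x by apply/conj_Creal/gtr0_real.
have := hpsd (v + (- (x * a)) *: w).
rewrite hformDl !hformDr !hformZl !hformZr v0 (hformC v w) -/a -/c rmorphN rmorphM /= xr.
have -> : 0 + (- (x * a^*) * a) + (- (x * a) * a^* + - (x * a) * (- (x * a^*) * c))
    = a * a^* * (x * (x * c - 2)) by ring.
rewrite nmulr_lge0 => [aa_le0|]; last first.
  by rewrite pmulr_rlt0 // subr_lt0 (lt_trans xc_lt1) // ltr1n.
by apply/eqP; rewrite -mul_conjC_eq0 eq_le mul_conjC_ge0 andbT.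
Qed.

End SemiunitaryForm.

Lemma bounded_op_null (C : numClosedFieldType) n (G A : 'M[C]_n) u :
  bounded_op G A -> hform G u u = 0 -> hform G (u *m A) (u *m A) = 0.
Proof.
case=> c [_ [_ bound_c]] u0; have := bound_c u; rewrite /semi_norm u0 sqrtC0 mulr0.
by rewrite le_eqVlt sqrtC_lt0 orbF sqrtC_eq0 => /eqP.
Qed.

Lemma bounded_op_stable_null (C : numClosedFieldType) n m (G A : 'M[C]_n)
    (Y : 'M_(m, n)) :
  (forall u, (hform G u u == 0) = (u <= Y)%MS) -> bounded_op G A -> stablemx Y A.
Proof.
move=> hY bA; apply/row_subP => i; rewrite row_mul -hY.
by apply/eqP/bounded_op_null => //; apply/eqP; rewrite hY row_sub.
Qed.

Section NullSubspace.
Variables (C : numClosedFieldType) (n m : nat) (G A : 'M[C]_n) (Y : 'M[C]_(m, n)).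
Hypotheses (hG : hermitian_mx G) (hpsd : psd_form G) (hind : indecomposable_op G A).
Hypothesis hY : forall u, (hform G u u == 0) = (u <= Y)%MS.
Hypothesis hnz : exists u, hform G u u != 0.

Lemma null_stable_summand_eq0 (V W : 'M[C]_n) :
  (V <= Y)%MS -> (V + W == 1%:M)%MS && mxdirect (V + W) ->
  stablemx V A -> stablemx W A -> V = 0.
Proof.
move=> VY VW sV sW; apply/eqP/negPn/negP => V_neq0; apply: hind.
exists V, W; split; rewrite ?sV ?sW //.
  apply/negP => /eqP W0; move: VW; rewrite W0 => /andP[/andP[_ fullV] _].
  have [u] := hnz; rewrite hY => /negP; apply.
  by rewrite (submx_trans (submx1 u)) // (submx_trans fullV) // addsmx0.
move=> v w vV _; apply: (hform_null_radical hG hpsd); apply/eqP.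
by rewrite hY (submx_trans vV VY).
Qed.

Hypothesis stabY : stablemx Y A.

Lemma null_chain_lift b (y : 'rV_n) k : (y <= Y)%MS ->
  y *m (A - b%:M) ^+ k.+1 = 0 -> (y *m (A - b%:M) ^+ k <= (A - b%:M) ^+ k.+1)%MS.
Proof.
move=> yY; set N := A - b%:M => yN.
apply/negPn/negP => /not_submx_separating_col[c [Nc ync]].
have stabN X : stablemx X N -> stablemx X A.
  by move=> XN; rewrite -(subrK b%:M A) stablemxD ?stablemxC.
have yNY j : (y *m N ^+ j <= Y)%MS.
  elim: j => [|j IH]; first by rewrite expr0 mulmx1.
  rewrite exprSr -mulmxE mulmxA (submx_trans (submxMr N IH)) //.
  by rewrite stablemxD ?stablemxN ?stablemxC.
have VK := chain_cochain_unit yN ync.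
have VY : (<<chain_mx k N y>> <= Y)%MS by rewrite genmxE; apply/row_subP => i; rewrite rowK.
have sV : stablemx <<chain_mx k N y>> A.
  by rewrite (eqmxMr A (genmxE _)) genmxE; apply/stabN/chain_mx_stable.
have sW : stablemx (kermx (cochain_mx k N c)) A by apply: stabN; apply: cochain_ker_stable.
have /eqP := null_stable_summand_eq0 VY (unitmx_mul_ker_direct VK) sV sW.
rewrite -mxrank_eq0 genmxE => /eqP rV0.
by have := mxrankM_maxl (chain_mx k N y) (cochain_mx k N c); rewrite rV0 mxrank_unit.
Qed.

End NullSubspace.

Lemma conj_chain_lift (F : fieldType) r s (P N : 'M[F]_(r + s)) :
  P \in unitmx ->
  (forall (y : 'rV_(r + s)) k, (y <= usubmx P)%MS ->
     y *m N ^+ k.+1 = 0 -> (y *m N ^+ k <= N ^+ k.+1)%MS) ->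
  forall (x : 'rV_r) k, row_mx x 0 *m (P *m N *m invmx P) ^+ k.+1 = 0 ->
    (row_mx x 0 *m (P *m N *m invmx P) ^+ k <= (P *m N *m invmx P) ^+ k.+1)%MS.
Proof.
move=> Pu lift x k; rewrite !conj_unitmxX // !mulmxA.
have -> : row_mx x 0 *m P = x *m usubmx P.
  by rewrite -{1}[P]vsubmxK mul_row_col mul0mx addr0.
move=> /(congr1 (mulmx^~ P)); rewrite mulmxKV // mul0mx => yN.
have Pfull : row_full P by rewrite row_full_unit.
rewrite submxMfree ?row_free_unit ?unitmx_inv // (eqmxMfull _ Pfull).
by apply: lift; rewrite ?submxMl.
Qed.

Unset Implicit Arguments. Set Strict Implicit.

Theorem theorem2p2 (C : numClosedFieldType) (r s : nat)
    (G A P : 'M[C]_(r + s)) (lam : C) :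
  hermitian_mx G ->
  psd_form G ->
  bounded_op G A ->
  indecomposable_op G A ->
  (* U_0 <> 0 and U_0 <> U *)
  (exists u : 'rV[C]_(r + s), u != 0 /\ hform G u u = 0) ->
  (exists u : 'rV[C]_(r + s), hform G u u != 0) ->
  (* P is a basis of U whose first r rows form a basis of U_0 *)
  P \in unitmx ->
  (forall u : 'rV[C]_(r + s), (hform G u u == 0) = (u <= usubmx P)%MS) ->
  eigenvalue (restr_op P A) lam ->
  [/\ eigenvalue (quot_op P A) lam,
      (forall (m0 : nat) (sz0 : 'I_m0 -> nat) (ev0 : 'I_m0 -> C), is_jordan_form (restr_op P A) sz0 ev0 ->
         (n_blocks ev0 lam <= alg_mult (quot_op P A) lam)%N)
    & (forall k : nat, (1 <= k)%N ->
       forall (m0 m1 : nat) (sz0 : 'I_m0 -> nat) (ev0 : 'I_m0 -> C) (sz1 : 'I_m1 -> nat) (ev1 : 'I_m1 -> C),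
         is_jordan_form (restr_op P A) sz0 ev0 ->
         is_jordan_form (quot_op P A) sz1 ev1 ->
         (n_blocks_of_size sz0 ev0 lam k <= n_blocks ev1 lam)%N)].
Proof.
move=> hG hpsd hbd hind _ hnz Pu hP hev.
have stabY := bounded_op_stable_null hP hbd.
have lift := conj_chain_lift Pu (null_chain_lift hG hpsd hind hP hnz stabY (b:=lam)).
rewrite conj_unitmx_subC // -(submxK (P *m A *m invmx P)) ursubmx_conj_stable //
  lblock_subC -/(restr_op P A) -/(quot_op P A) in lift.
have [m nullity] := lblock_nullity_le lift.
have nb_gt0 : (0 < r - \rank (restr_op P A - lam%:M)%R)%N.
  by rewrite subn_gt0 -eigenvalue_mxrank.
have nb_le_mup : (r - \rank (restr_op P A - lam%:M)%R <= alg_mult (quot_op P A) lam)%N.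
  by rewrite (leq_trans nullity) // -mxrank_ker mxrank_ker_subCX_le_mup.
split.
- rewrite eigenvalue_root_char; apply/negPn/negP => /mupNroot mup0.
  by move: (leq_trans nb_gt0 nb_le_mup); rewrite /alg_mult mup0.
- by move=> m0 sz0 ev0 J0; rewrite (jordan_form_n_blocksE J0).
- move=> [//|k] _ m0 m1 sz0 ev0 sz1 ev1 J0 J1.
  rewrite (jordan_form_n_blocks_of_sizeE J0) (jordan_form_n_blocksE J1).
  exact: lblock_rank_second_diff_le lift k.
Qed.
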